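(* Let $\mathcal{C}$ and $\mathcal{D}$ be $*$-categories. If $\mathcal{D}$ is a pre-Hilbert $*$-category, then $[\mathcal{C},\mathcal{D}]_*$ is also a pre-Hilbert $*$-category.
   Context: A $*$-category is a category with a choice of $f^*\colon Y\to X$ for each $f\colon X\to Y$ such that $1^*=1$, $(gf)^*=f^*g^*$, $(f^* )^*=f$; $f$ is an isometry if $f^*f=1$. A $*$-functor is a functor $F$ between $*$-categories with $F(f^* )=(Ff)^*$. $[\mathcal{C},\mathcal{D}]_*$ is the full subcategory of the functor category $[\mathcal{C},\mathcal{D}]$ on the $*$-functors, made into a $*$-category by the componentwise involution $(\sigma^* )_X=(\sigma_X)^*$ for natural transformations $\sigma$. A pre-Hilbert $*$-category is a $*$-category in which (R1) there is a zero object, (R2) every pair of objects has an orthonormal biproduct (a biproduct $(X,s_1,r_1,s_2,r_2)$ with $r_k=s_k^*$), (R3) every morphism has an isometric kernel (an equaliser with the zero morphism that is an isometry), and (R4) every diagonal $\Delta\colon X\to X\oplus X$ is a normal monomorphism (a kernel of some morphism). *)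

From Stdlib Require Import ProofIrrelevance FunctionalExtensionality.
Set Implicit Arguments.
Unset Strict Implicit.

Record Cat := {
  ob :> Type;
  hom : ob -> ob -> Type;
  idm : forall X, hom X X;
  comp : forall X Y Z, hom Y Z -> hom X Y -> hom X Z;
  comp_id_l : forall X Y (f : hom X Y), comp (idm Y) f = f;
  comp_id_r : forall X Y (f : hom X Y), comp f (idm X) = f;
  comp_assoc : forall X Y Z W (f : hom X Y) (g : hom Y Z) (h : hom Z W),
      comp h (comp g f) = comp (comp h g) f }.
Arguments hom {c}.
Arguments idm {c}.
Arguments comp {c X Y Z}.

Record StarCat := {
  scat :> Cat;
  star : forall (X Y : scat), hom X Y -> hom Y X;
  star_idm : forall X, star (idm X) = idm X;
  star_comp : forall X Y Z (f : hom X Y) (g : hom Y Z),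
      star (comp g f) = comp (star f) (star g);
  star_invol : forall X Y (f : hom X Y), star (star f) = f }.
Arguments star {s X Y}.

Record Functor (C D : Cat) := {
  fob :> C -> D;
  fmap : forall X Y, hom X Y -> hom (fob X) (fob Y);
  fmap_id : forall X, fmap (idm X) = idm (fob X);
  fmap_comp : forall X Y Z (f : hom X Y) (g : hom Y Z),
      fmap (comp g f) = comp (fmap g) (fmap f) }.
Arguments fmap {C D} _ {X Y}.

Definition is_star_functor (C D : StarCat) (F : Functor C D) : Prop :=
  forall X Y (f : hom X Y), fmap F (star f) = star (fmap F f).

Record NatTrans (C D : Cat) (F G : Functor C D) := {
  component :> forall X, hom (F X) (G X);
  naturality : forall X Y (f : hom X Y),
      comp (fmap G f) (component X) = comp (component Y) (fmap F f) }.

Lemma nt_eq (C D : Cat) (F G : Functor C D) (s t : NatTrans F G) :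
  (forall X, s X = t X) -> s = t.
Proof.
  destruct s as [s hs], t as [t ht]; simpl; intro H.
  assert (s = t) by (apply functional_extensionality_dep; exact H).
  subst t. f_equal. apply proof_irrelevance.
Qed.

Section FunCat.
Variables C D : StarCat.

Definition SFun := { F : Functor C D | is_star_functor F }.

Definition nt_id (F : Functor C D) : NatTrans F F.
Proof.
  refine {| component := fun X => idm (F X) |}.
  intros; rewrite comp_id_l, comp_id_r; reflexivity.
Defined.

Definition nt_comp (F G H : Functor C D) (t : NatTrans G H) (s : NatTrans F G)
  : NatTrans F H.
Proof.
  refine {| component := fun X => comp (t X) (s X) |}.
  intros X Y f.
  rewrite comp_assoc, (naturality t), <- comp_assoc, (naturality s), comp_assoc.
  reflexivity.
Defined.

Definition nt_star (F G : SFun) (s : NatTrans (proj1_sig F) (proj1_sig G))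
  : NatTrans (proj1_sig G) (proj1_sig F).
Proof.
  refine {| component := fun X => star (s X) |}.
  intros X Y f.
  pose proof (naturality s (star f)) as E.
  apply (f_equal (@star D _ _)) in E.
  rewrite !star_comp in E.
  rewrite (proj2_sig G), (proj2_sig F), !star_invol in E.
  symmetry; exact E.
Defined.

Definition FunCat_cat : Cat.
Proof.
  refine {| ob := SFun;
            hom := fun F G => NatTrans (proj1_sig F) (proj1_sig G);
            idm := fun F => nt_id (proj1_sig F);
            comp := fun F G H t s => nt_comp t s |}.
  - intros; apply nt_eq; intro; simpl; apply comp_id_l.
  - intros; apply nt_eq; intro; simpl; apply comp_id_r.
  - intros; apply nt_eq; intro; simpl; apply comp_assoc.
Defined.

Definition FunStarCat : StarCat.
Proof.
  refine {| scat := FunCat_cat; star := fun F G s => @nt_star F G s |}.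
  - intros; apply nt_eq; intro; simpl; apply star_idm.
  - intros; apply nt_eq; intro; simpl; apply star_comp.
  - intros; apply nt_eq; intro; simpl; apply star_invol.
Defined.

End FunCat.

Section PreHilbert.
Variable C : StarCat.

Definition is_zero_object (Z : C) : Prop :=
  (forall X : C, exists! f : hom X Z, True) /\
  (forall X : C, exists! f : hom Z X, True).

Definition is_zero_mor (X Y : C) (f : hom X Y) : Prop :=
  exists (Z : C) (g : hom X Z) (h : hom Z Y), is_zero_object Z /\ f = comp h g.

Definition is_isometry (X Y : C) (f : hom X Y) : Prop := comp (star f) f = idm X.

Definition is_product (X1 X2 P : C) (p1 : hom P X1) (p2 : hom P X2) : Prop :=
  forall (W : C) (f1 : hom W X1) (f2 : hom W X2),
    exists! u : hom W P, comp p1 u = f1 /\ comp p2 u = f2.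

Definition is_coproduct (X1 X2 P : C) (i1 : hom X1 P) (i2 : hom X2 P) : Prop :=
  forall (W : C) (f1 : hom X1 W) (f2 : hom X2 W),
    exists! u : hom P W, comp u i1 = f1 /\ comp u i2 = f2.

Definition is_biproduct (X1 X2 X : C) (s1 : hom X1 X) (r1 : hom X X1)
    (s2 : hom X2 X) (r2 : hom X X2) : Prop :=
  is_product r1 r2 /\ is_coproduct s1 s2 /\
  comp r1 s1 = idm X1 /\ comp r2 s2 = idm X2 /\
  is_zero_mor (comp r2 s1) /\ is_zero_mor (comp r1 s2).

Definition is_orthonormal_biproduct (X1 X2 X : C) (s1 : hom X1 X) (r1 : hom X X1)
    (s2 : hom X2 X) (r2 : hom X X2) : Prop :=
  is_biproduct s1 r1 s2 r2 /\ r1 = star s1 /\ r2 = star s2.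

Definition is_kernel (X Y K : C) (f : hom X Y) (k : hom K X) : Prop :=
  is_zero_mor (comp f k) /\
  forall (W : C) (g : hom W X), is_zero_mor (comp f g) ->
    exists! u : hom W K, comp k u = g.

Definition is_normal_mono (K X : C) (k : hom K X) : Prop :=
  exists (Y : C) (f : hom X Y), is_kernel f k.

Definition is_pre_hilbert : Prop :=
  (exists Z : C, is_zero_object Z) /\
  (forall X1 X2 : C, exists (X : C) (s1 : hom X1 X) (r1 : hom X X1)
                            (s2 : hom X2 X) (r2 : hom X X2),
      is_orthonormal_biproduct s1 r1 s2 r2) /\
  (forall (X Y : C) (f : hom X Y),
      exists (K : C) (k : hom K X), is_kernel f k /\ is_isometry k) /\
  (forall (X XX : C) (s1 : hom X XX) (r1 : hom XX X) (s2 : hom X XX) (r2 : hom XX X),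
      is_orthonormal_biproduct s1 r1 s2 r2 ->
      forall d : hom X XX, comp r1 d = idm X -> comp r2 d = idm X ->
      is_normal_mono d).

End PreHilbert.

(* Everything in [C,D]_* is built objectwise from D.  A zero object, isometric
   kernels and orthonormal biproducts are chosen at each object; on morphisms the
   kernel functor acts by k_Y^* ∘ F f ∘ k_X, which is functorial because k_Y k_Y^*
   fixes every map killed by th_Y, and the biproduct functor acts by the map induced
   into the product.  Conversely, a product in [C,D]_* is isomorphic to the
   objectwise one, hence is an objectwise product, so every component of a diagonal
   d of [C,D]_* is a diagonal of D and thus a normal mono.  A normal mono m is the
   kernel of k^* for k a kernel of m^*; applying this objectwise with k the isometric
   kernel of d^*, and using the retraction r1 of d to make the factorisations
   natural, shows that d is the kernel of k^*. *)

From Stdlib Require Import ClassicalEpsilon ChoiceFacts.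
Set Implicit Arguments.
Unset Strict Implicit.

Local Infix "∘" := comp (at level 40, left associativity).

Section StarCategoryFacts.
Variable S : StarCat.

Lemma zero_object_to_eq (Z X : S) (f g : hom X Z) : is_zero_object Z -> f = g.
Proof.
  intros [HZ _]. destruct (HZ X) as [x [_ Hx]].
  rewrite <- (Hx f I), <- (Hx g I); reflexivity.
Qed.

Lemma zero_object_from_eq (Z X : S) (f g : hom Z X) : is_zero_object Z -> f = g.
Proof.
  intros [_ HZ]. destruct (HZ X) as [x [_ Hx]].
  rewrite <- (Hx f I), <- (Hx g I); reflexivity.
Qed.

Lemma zero_mor_through (Z X Y : S) (a : hom X Z) (b : hom Z Y) :
  is_zero_object Z -> is_zero_mor (b ∘ a).
Proof. intro HZ; exists Z, a, b; auto. Qed.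

Lemma zero_mor_factor (Z X Y : S) (f : hom X Y) :
  is_zero_object Z -> is_zero_mor f -> exists (a : hom X Z) (b : hom Z Y), f = b ∘ a.
Proof.
  intros HZ [Z' [g [h [HZ' ->]]]].
  destruct (proj1 HZ Z') as [a _], (proj2 HZ Z') as [b _].
  exists (a ∘ g), (h ∘ b).
  rewrite comp_assoc, <- (comp_assoc a b h), (zero_object_to_eq (b ∘ a) (idm Z') HZ').
  rewrite comp_id_r; reflexivity.
Qed.

Lemma zero_mor_eq (X Y : S) (f g : hom X Y) :
  is_zero_mor f -> is_zero_mor g -> f = g.
Proof.
  intros [Z [a [b [HZ ->]]]] Hg.
  destruct (zero_mor_factor HZ Hg) as [a' [b' ->]].
  rewrite (zero_object_from_eq b b' HZ), (zero_object_to_eq a a' HZ); reflexivity.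
Qed.

Lemma zero_mor_compl (X Y W : S) (f : hom X Y) (h : hom Y W) :
  is_zero_mor f -> is_zero_mor (h ∘ f).
Proof. intros [Z [a [b [HZ ->]]]]. rewrite comp_assoc. exact (zero_mor_through _ _ HZ). Qed.

Lemma zero_mor_compr (X Y W : S) (f : hom X Y) (h : hom W X) :
  is_zero_mor f -> is_zero_mor (f ∘ h).
Proof. intros [Z [a [b [HZ ->]]]]. rewrite <- comp_assoc. exact (zero_mor_through _ _ HZ). Qed.

Lemma zero_mor_star (X Y : S) (f : hom X Y) : is_zero_mor f -> is_zero_mor (star f).
Proof. intros [Z [a [b [HZ ->]]]]. rewrite star_comp. exact (zero_mor_through _ _ HZ). Qed.

Section Product.
Variables (X1 X2 P : S) (p1 : hom P X1) (p2 : hom P X2).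
Hypothesis Hp : is_product p1 p2.

Lemma product_ext (W : S) (u v : hom W P) : p1 ∘ u = p1 ∘ v -> p2 ∘ u = p2 ∘ v -> u = v.
Proof.
  intros E1 E2. destruct (Hp (p1 ∘ u) (p2 ∘ u)) as [x [_ Hx]].
  rewrite <- (Hx u), <- (Hx v); auto.
Qed.

Definition pairing (W : S) (f1 : hom W X1) (f2 : hom W X2) : hom W P :=
  proj1_sig (constructive_indefinite_description _ (Hp f1 f2)).

Lemma pairing_spec (W : S) (f1 : hom W X1) (f2 : hom W X2) :
  p1 ∘ pairing f1 f2 = f1 /\ p2 ∘ pairing f1 f2 = f2.
Proof. exact (proj1 (proj2_sig (constructive_indefinite_description _ (Hp f1 f2)))). Qed.

Lemma coproduct_star : is_coproduct (star p1) (star p2).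
Proof.
  intros W f1 f2. exists (star (pairing (star f1) (star f2))).
  destruct (pairing_spec (star f1) (star f2)) as [E1 E2]. split.
  - rewrite <- !star_comp, E1, E2, !star_invol; auto.
  - intros v [V1 V2]. rewrite <- (star_invol v). f_equal.
    apply product_ext; [rewrite E1, <- V1 | rewrite E2, <- V2];
      rewrite star_comp, star_invol; reflexivity.
Qed.

Lemma product_retract (Q : S) (q1 : hom Q X1) (q2 : hom Q X2)
    (phi : hom Q P) (psi : hom P Q) :
  p1 ∘ phi = q1 -> p2 ∘ phi = q2 -> q1 ∘ psi = p1 -> q2 ∘ psi = p2 ->
  psi ∘ phi = idm Q -> is_product q1 q2.
Proof.
  intros E1 E2 F1 F2 I W f1 f2.
  destruct (Hp f1 f2) as [u [[U1 U2] Hu]].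
  exists (psi ∘ u). split.
  - rewrite !comp_assoc, F1, F2; auto.
  - intros v [V1 V2].
    assert (Hv : phi ∘ v = u)
      by (symmetry; apply Hu; rewrite !comp_assoc, E1, E2; auto).
    rewrite <- Hv, comp_assoc, I, comp_id_l; reflexivity.
Qed.

End Product.

Lemma orthonormal_biproduct_of_product (X1 X2 X : S)
    (s1 : hom X1 X) (r1 : hom X X1) (s2 : hom X2 X) (r2 : hom X X2) :
  is_product r1 r2 -> r1 = star s1 -> r2 = star s2 ->
  r1 ∘ s1 = idm X1 -> r2 ∘ s2 = idm X2 -> is_zero_mor (r2 ∘ s1) ->
  is_orthonormal_biproduct s1 r1 s2 r2.
Proof.
  intros Hp -> -> E1 E2 Z.
  assert (Z' : is_zero_mor (star s1 ∘ s2)).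
  { rewrite <- (star_invol s2), <- star_comp. exact (zero_mor_star Z). }
  assert (Hc : is_coproduct s1 s2).
  { rewrite <- (star_invol s1), <- (star_invol s2). exact (coproduct_star Hp). }
  repeat split; assumption.
Qed.

Lemma orthonormal_biproduct_mor (A1 A2 X B1 B2 Y : S)
    (s1 : hom A1 X) (r1 : hom X A1) (s2 : hom A2 X) (r2 : hom X A2)
    (t1 : hom B1 Y) (q1 : hom Y B1) (t2 : hom B2 Y) (q2 : hom Y B2)
    (u : hom X Y) (f1 : hom A1 B1) (f2 : hom A2 B2) :
  is_orthonormal_biproduct s1 r1 s2 r2 -> is_orthonormal_biproduct t1 q1 t2 q2 ->
  q1 ∘ u = f1 ∘ r1 -> q2 ∘ u = f2 ∘ r2 ->
  u ∘ s1 = t1 ∘ f1 /\ u ∘ s2 = t2 ∘ f2.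
Proof.
  intros [(_ & _ & R1 & R2 & Z21 & Z12) _] [(Hq & _ & Q1 & Q2 & W21 & W12) _] U1 U2.
  split; apply (product_ext Hq).
  - rewrite !comp_assoc, U1, Q1, <- comp_assoc, R1, comp_id_l, comp_id_r; reflexivity.
  - apply zero_mor_eq.
    + rewrite comp_assoc, U2, <- comp_assoc. exact (zero_mor_compl _ Z21).
    + rewrite comp_assoc. exact (zero_mor_compr _ W21).
  - apply zero_mor_eq.
    + rewrite comp_assoc, U1, <- comp_assoc. exact (zero_mor_compl _ Z12).
    + rewrite comp_assoc. exact (zero_mor_compr _ W12).
  - rewrite !comp_assoc, U2, Q2, <- comp_assoc, R2, comp_id_l, comp_id_r; reflexivity.
Qed.

Section Kernel.
Variables (X Y K : S) (f : hom X Y) (k : hom K X).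
Hypothesis Hk : is_kernel f k.

Lemma kernel_mono (W : S) (u v : hom W K) : k ∘ u = k ∘ v -> u = v.
Proof.
  intro E. destruct Hk as [Z Hlift].
  destruct (Hlift W (k ∘ u)) as [w [_ Hw]].
  - rewrite comp_assoc. exact (zero_mor_compr u Z).
  - rewrite <- (Hw u), <- (Hw v); auto.
Qed.

Lemma isometric_kernel_lift (W : S) (g : hom W X) :
  is_isometry k -> is_zero_mor (f ∘ g) -> k ∘ (star k ∘ g) = g.
Proof.
  intros I Hg. destruct (proj2 Hk W g Hg) as [w [<- _]].
  rewrite (comp_assoc w k (star k)). unfold is_isometry in I.
  rewrite I, comp_id_l; reflexivity.
Qed.

End Kernel.

Lemma kernel_star_of_normal_mono (A B K : S) (m : hom A B) (k : hom K B) :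
  is_normal_mono m -> is_kernel (star m) k -> is_kernel (star k) m.
Proof.
  intros [Y [f Hm]] Hk. split.
  - rewrite <- (star_invol m), <- star_comp. exact (zero_mor_star (proj1 Hk)).
  - intros W h Hh.
    assert (Hfk : is_zero_mor (star m ∘ star f))
      by (rewrite <- star_comp; exact (zero_mor_star (proj1 Hm))).
    destruct (proj2 Hk _ _ Hfk) as [v [Hv _]].
    assert (Ef : f = star v ∘ star k)
      by (rewrite <- star_comp, Hv, star_invol; reflexivity).
    destruct (proj2 Hm W h) as [u [Hu _]].
    + rewrite Ef, <- comp_assoc. exact (zero_mor_compl _ Hh).
    + exists u. split; [exact Hu|].
      intros u' Hu'. apply (kernel_mono Hm). rewrite Hu, Hu'; reflexivity.
Qed.

End StarCategoryFacts.

Lemma dependent_choice (A : Type) (B : A -> Type) (R : forall x, B x -> Prop) :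
  (forall x, exists y, R x y) -> exists f : forall x, B x, forall x, R x (f x).
Proof. apply (non_dep_dep_functional_choice choice). Qed.
Arguments dependent_choice {A B} R _.

Section FunctorCategory.
Variables C D : StarCat.
Local Notation FC := (FunStarCat C D).

Lemma component_eq (F G : FC) (t u : hom F G) (X : C) : t = u -> t X = u X.
Proof. intros ->; reflexivity. Qed.

Definition const_functor (d : D) : Functor C D.
Proof.
  refine {| fob := fun _ => d; fmap := fun _ _ _ => idm d |}.
  - reflexivity.
  - intros; symmetry; apply comp_id_l.
Defined.

Lemma const_is_star_functor (d : D) : is_star_functor (const_functor d).
Proof. intros X Y f; symmetry; apply star_idm. Qed.

Definition const_sfun (d : D) : FC := exist _ (const_functor d) (const_is_star_functor d).

Variable z : D.
Hypothesis z_zero : is_zero_object z.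

Lemma const_zero_object : is_zero_object (const_sfun z).
Proof.
  split; intros [F HF].
  - destruct (dependent_choice (fun X (c : hom (F X) z) => True)) as [c _].
    { intro X. destruct (proj1 z_zero (F X)) as [c _]; eauto. }
    exists (@Build_NatTrans C D F (const_functor z) c
              (fun X Y f => zero_object_to_eq _ _ z_zero)).
    split; [exact I|]. intros t _. apply nt_eq; intro X. exact (zero_object_to_eq _ _ z_zero).
  - destruct (dependent_choice (fun X (c : hom z (F X)) => True)) as [c _].
    { intro X. destruct (proj2 z_zero (F X)) as [c _]; eauto. }
    exists (@Build_NatTrans C D (const_functor z) F c
              (fun X Y f => zero_object_from_eq _ _ z_zero)).
    split; [exact I|]. intros t _. apply nt_eq; intro X. exact (zero_object_from_eq _ _ z_zero).
Qed.

Lemma is_zero_mor_pointwise (F G : FC) (t : hom F G) :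
  is_zero_mor t <-> forall X, is_zero_mor (t X).
Proof.
  split.
  - intros Ht X. destruct (zero_mor_factor const_zero_object Ht) as [a [b ->]].
    exact (zero_mor_through (a X) (b X) z_zero).
  - intro Ht.
    destruct (proj1 const_zero_object F) as [a _], (proj2 const_zero_object G) as [b _].
    exists (const_sfun z), a, b. split; [exact const_zero_object|].
    apply nt_eq; intro X. apply zero_mor_eq; [exact (Ht X)|].
    exact (zero_mor_through (a X) (b X) z_zero).
Qed.

(* The retraction [r] is what makes the objectwise factorisations natural:
   they are the components of [r ∘ g]. *)
Lemma kernel_of_pointwise (K F G : FC) (t : hom K F) (s : hom F G) (r : hom F K) :
  (forall X, is_kernel (s X) (t X)) -> r ∘ t = idm K -> is_kernel s t.
Proof.
  intros Ht Ert. split.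
  - apply is_zero_mor_pointwise; intro X. exact (proj1 (Ht X)).
  - intros W g Hg. exists (r ∘ g). split.
    + apply nt_eq; intro X. simpl.
      destruct (proj2 (Ht X) _ (g X) (proj1 (is_zero_mor_pointwise _) Hg X)) as [u [<- _]].
      pose proof (component_eq X Ert) as E; simpl in E.
      rewrite (comp_assoc u (t X) (r X)), E, comp_id_l; reflexivity.
    + intros v <-. rewrite comp_assoc, Ert, comp_id_l; reflexivity.
Qed.

Section PointwiseBiproduct.
Variables (F1 F2 : Functor C D) (HF1 : is_star_functor F1) (HF2 : is_star_functor F2).
Variables (P : C -> D) (s1 : forall X, hom (F1 X) (P X)) (r1 : forall X, hom (P X) (F1 X))
  (s2 : forall X, hom (F2 X) (P X)) (r2 : forall X, hom (P X) (F2 X)).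
Hypothesis P_biproduct : forall X, is_orthonormal_biproduct (s1 X) (r1 X) (s2 X) (r2 X).

Lemma component_product (X : C) : is_product (r1 X) (r2 X).
Proof. exact (proj1 (proj1 (P_biproduct X))). Qed.
Arguments component_product X : clear implicits.

Definition biproduct_fmap (X Y : C) (f : hom X Y) : hom (P X) (P Y) :=
  pairing (component_product Y) (fmap F1 f ∘ r1 X) (fmap F2 f ∘ r2 X).

Lemma biproduct_fmap_spec (X Y : C) (f : hom X Y) :
  r1 Y ∘ biproduct_fmap f = fmap F1 f ∘ r1 X /\ r2 Y ∘ biproduct_fmap f = fmap F2 f ∘ r2 X.
Proof. apply pairing_spec. Qed.

Lemma biproduct_fmap_id (X : C) : biproduct_fmap (idm X) = idm (P X).
Proof.
  destruct (biproduct_fmap_spec (idm X)) as [E1 E2].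
  apply (product_ext (component_product X));
    rewrite ?E1, ?E2, fmap_id, comp_id_l, comp_id_r; reflexivity.
Qed.

Lemma biproduct_fmap_comp (X Y Z : C) (f : hom X Y) (g : hom Y Z) :
  biproduct_fmap (g ∘ f) = biproduct_fmap g ∘ biproduct_fmap f.
Proof.
  destruct (biproduct_fmap_spec f) as [E1 E2], (biproduct_fmap_spec g) as [G1 G2],
    (biproduct_fmap_spec (g ∘ f)) as [H1 H2].
  apply (product_ext (component_product Z)); rewrite comp_assoc, ?H1, ?H2, ?G1, ?G2,
    <- comp_assoc, ?E1, ?E2, comp_assoc, fmap_comp; reflexivity.
Qed.

Lemma biproduct_fmap_star (X Y : C) (f : hom X Y) :
  biproduct_fmap (star f) = star (biproduct_fmap f).
Proof.
  destruct (P_biproduct X) as [_ [R1 R2]], (P_biproduct Y) as [_ [R1' R2']].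
  destruct (biproduct_fmap_spec f) as [E1 E2], (biproduct_fmap_spec (star f)) as [S1 S2].
  destruct (orthonormal_biproduct_mor (P_biproduct X) (P_biproduct Y) E1 E2) as [I1 I2].
  apply (product_ext (component_product X)).
  - rewrite S1, HF1, R1, R1', <- !star_comp, I1; reflexivity.
  - rewrite S2, HF2, R2, R2', <- !star_comp, I2; reflexivity.
Qed.

Definition biproduct_functor : Functor C D :=
  {| fmap := biproduct_fmap; fmap_id := biproduct_fmap_id;
     fmap_comp := biproduct_fmap_comp |}.

Definition biproduct_sfun : FC := exist _ biproduct_functor biproduct_fmap_star.

Definition biproduct_fst : hom biproduct_sfun (exist _ F1 HF1 : FC) :=
  @Build_NatTrans C D biproduct_functor F1 r1
    (fun X Y f => eq_sym (proj1 (biproduct_fmap_spec f))).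

Definition biproduct_snd : hom biproduct_sfun (exist _ F2 HF2 : FC) :=
  @Build_NatTrans C D biproduct_functor F2 r2
    (fun X Y f => eq_sym (proj2 (biproduct_fmap_spec f))).

Lemma biproduct_nt_product : is_product biproduct_fst biproduct_snd.
Proof.
  intros [W HW] g1 g2.
  set (u := fun X => pairing (component_product X) (g1 X) (g2 X)).
  assert (Hu : forall X, r1 X ∘ u X = g1 X /\ r2 X ∘ u X = g2 X)
    by (intro X; apply pairing_spec).
  assert (Hnat : forall X Y (f : hom X Y), biproduct_fmap f ∘ u X = u Y ∘ fmap W f).
  { intros X Y f. destruct (biproduct_fmap_spec f) as [E1 E2].
    apply (product_ext (component_product Y)); rewrite !comp_assoc, ?E1, ?E2,
      ?(proj1 (Hu Y)), ?(proj2 (Hu Y)), <- !comp_assoc, ?(proj1 (Hu X)), ?(proj2 (Hu X));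
      apply naturality. }
  exists (@Build_NatTrans C D W biproduct_functor u Hnat). split.
  - split; apply nt_eq; intro X; apply Hu.
  - intros v [<- <-]. apply nt_eq; intro X.
    apply (product_ext (component_product X)); apply Hu.
Qed.

Lemma biproduct_nt_orthonormal :
  is_orthonormal_biproduct (star biproduct_fst) biproduct_fst
    (star biproduct_snd) biproduct_snd.
Proof.
  apply orthonormal_biproduct_of_product;
    [exact biproduct_nt_product | symmetry; apply star_invol | symmetry; apply star_invol
    | apply nt_eq | apply nt_eq | apply is_zero_mor_pointwise]; intro X; simpl;
    destruct (P_biproduct X) as [(_ & _ & E1 & E2 & Z21 & _) [R1 R2]];
    rewrite ?R1, ?R2 in *; rewrite !star_invol; assumption.
Qed.

End PointwiseBiproduct.

Hypothesis D_biproducts : forall X1 X2 : D, exists (X : D) (s1 : hom X1 X) (r1 : hom X X1)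
  (s2 : hom X2 X) (r2 : hom X X2), is_orthonormal_biproduct s1 r1 s2 r2.

Record orthonormal_biproduct_data (X1 X2 : D) := {
  bp_ob : D; bp_s1 : hom X1 bp_ob; bp_r1 : hom bp_ob X1; bp_s2 : hom X2 bp_ob;
  bp_r2 : hom bp_ob X2; bp_orthonormal : is_orthonormal_biproduct bp_s1 bp_r1 bp_s2 bp_r2 }.

Lemma has_orthonormal_biproducts (F1 F2 : FC) :
  exists (P : FC) (p1 : hom P F1) (p2 : hom P F2),
    is_orthonormal_biproduct (star p1) p1 (star p2) p2 /\
    forall X, is_product (p1 X) (p2 X).
Proof.
  destruct F1 as [F1 HF1], F2 as [F2 HF2].
  destruct (dependent_choice (fun X (_ : orthonormal_biproduct_data (F1 X) (F2 X)) => True))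
    as [b _].
  { intro X. destruct (D_biproducts (F1 X) (F2 X)) as (P & s1 & r1 & s2 & r2 & H).
    exists (Build_orthonormal_biproduct_data H); exact I. }
  pose (Hb X := bp_orthonormal (b X)).
  exists (biproduct_sfun HF1 HF2 Hb), (biproduct_fst HF1 HF2 Hb), (biproduct_snd HF1 HF2 Hb).
  split; [exact (biproduct_nt_orthonormal HF1 HF2 Hb) | intro X; exact (proj1 (proj1 (Hb X)))].
Qed.

Lemma product_pointwise (P F1 F2 : FC) (p1 : hom P F1) (p2 : hom P F2) :
  is_product p1 p2 -> forall X, is_product (p1 X) (p2 X).
Proof.
  intros Hp X.
  destruct (has_orthonormal_biproducts F1 F2) as (Q & q1 & q2 & [[HQ _] _] & HQX).
  destruct (pairing_spec HQ p1 p2) as [Phi1 Phi2], (pairing_spec Hp q1 q2) as [Psi1 Psi2].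
  assert (Id : pairing Hp q1 q2 ∘ pairing HQ p1 p2 = idm P).
  { apply (product_ext Hp); rewrite comp_assoc, ?Psi1, ?Psi2, comp_id_r; assumption. }
  exact (product_retract (HQX X) (component_eq X Phi1) (component_eq X Phi2)
           (component_eq X Psi1) (component_eq X Psi2) (component_eq X Id)).
Qed.

Lemma orthonormal_biproduct_pointwise (F1 F2 P : FC) (s1 : hom F1 P) (r1 : hom P F1)
    (s2 : hom F2 P) (r2 : hom P F2) :
  is_orthonormal_biproduct s1 r1 s2 r2 ->
  forall X, is_orthonormal_biproduct (s1 X) (r1 X) (s2 X) (r2 X).
Proof.
  intros [(Hp & _ & E1 & E2 & Z21 & _) [R1 R2]] X.
  apply orthonormal_biproduct_of_product.
  - exact (product_pointwise Hp (X := X)).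
  - exact (component_eq X R1).
  - exact (component_eq X R2).
  - exact (component_eq X E1).
  - exact (component_eq X E2).
  - exact (proj1 (is_zero_mor_pointwise _) Z21 X).
Qed.

Section PointwiseKernel.
Variables (F G : Functor C D) (HF : is_star_functor F) (HG : is_star_functor G).
Variable th : NatTrans F G.
Variables (K : C -> D) (k : forall X, hom (K X) (F X)).
Hypothesis k_kernel : forall X, is_kernel (th X) (k X).
Hypothesis k_isometry : forall X, is_isometry (k X).

Definition kernel_fmap (X Y : C) (f : hom X Y) : hom (K X) (K Y) :=
  star (k Y) ∘ (fmap F f ∘ k X).

Lemma kernel_fmap_spec (X Y : C) (f : hom X Y) : k Y ∘ kernel_fmap f = fmap F f ∘ k X.
Proof.
  apply (isometric_kernel_lift (k_kernel Y) (k_isometry Y)).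
  rewrite comp_assoc, <- (naturality th), <- comp_assoc.
  exact (zero_mor_compl _ (proj1 (k_kernel X))).
Qed.

Lemma kernel_fmap_id (X : C) : kernel_fmap (idm X) = idm (K X).
Proof. unfold kernel_fmap. rewrite fmap_id, comp_id_l. apply k_isometry. Qed.

Lemma kernel_fmap_comp (X Y Z : C) (f : hom X Y) (g : hom Y Z) :
  kernel_fmap (g ∘ f) = kernel_fmap g ∘ kernel_fmap f.
Proof.
  unfold kernel_fmap at 2.
  rewrite <- !comp_assoc, (kernel_fmap_spec f).
  unfold kernel_fmap. rewrite fmap_comp, !comp_assoc; reflexivity.
Qed.

Lemma kernel_fmap_star (X Y : C) (f : hom X Y) :
  kernel_fmap (star f) = star (kernel_fmap f).
Proof.
  unfold kernel_fmap. rewrite HF, !star_comp, star_invol, comp_assoc; reflexivity.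
Qed.

Definition kernel_functor : Functor C D :=
  {| fmap := kernel_fmap; fmap_id := kernel_fmap_id; fmap_comp := kernel_fmap_comp |}.

Definition kernel_sfun : FC := exist _ kernel_functor kernel_fmap_star.

Definition kernel_nt : hom kernel_sfun (exist _ F HF : FC) :=
  @Build_NatTrans C D kernel_functor F k (fun X Y f => eq_sym (kernel_fmap_spec f)).

Lemma kernel_nt_isometry : is_isometry kernel_nt.
Proof. apply nt_eq; intro X. apply k_isometry. Qed.

Lemma kernel_nt_kernel : is_kernel (th : hom (exist _ F HF : FC) (exist _ G HG)) kernel_nt.
Proof.
  apply (kernel_of_pointwise (r := star kernel_nt)); [exact k_kernel | exact kernel_nt_isometry].
Qed.

End PointwiseKernel.

Hypothesis D_kernels : forall (X Y : D) (f : hom X Y),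
  exists (K : D) (k : hom K X), is_kernel f k /\ is_isometry k.

Record isometric_kernel_data (X Y : D) (f : hom X Y) := {
  ik_ob : D; ik_mor : hom ik_ob X; ik_kernel : is_kernel f ik_mor;
  ik_isometry : is_isometry ik_mor }.

Lemma has_isometric_kernels (F G : FC) (th : hom F G) :
  exists (K : FC) (k : hom K F),
    is_kernel th k /\ is_isometry k /\ forall X, is_kernel (th X) (k X).
Proof.
  destruct F as [F HF], G as [G HG].
  destruct (dependent_choice (fun X (_ : isometric_kernel_data (th X)) => True)) as [kd _].
  { intro X. destruct (D_kernels (th X)) as (K & k & Hk & Ik).
    exists (Build_isometric_kernel_data Hk Ik); exact I. }
  pose (Hk X := ik_kernel (kd X)).
  pose (Ik X := ik_isometry (kd X)).
  exists (kernel_sfun HF Hk Ik), (kernel_nt HF Hk Ik).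
  split; [apply kernel_nt_kernel | split; [apply kernel_nt_isometry | exact Hk]].
Qed.

Hypothesis D_diagonals_normal :
  forall (X XX : D) (s1 : hom X XX) (r1 : hom XX X) (s2 : hom X XX) (r2 : hom XX X),
    is_orthonormal_biproduct s1 r1 s2 r2 ->
    forall d : hom X XX, r1 ∘ d = idm X -> r2 ∘ d = idm X -> is_normal_mono d.

Lemma diagonal_normal_mono (F P : FC) (s1 : hom F P) (r1 : hom P F) (s2 : hom F P)
    (r2 : hom P F) (d : hom F P) :
  is_orthonormal_biproduct s1 r1 s2 r2 -> r1 ∘ d = idm F -> r2 ∘ d = idm F ->
  is_normal_mono d.
Proof.
  intros Hb E1 E2.
  destruct (has_isometric_kernels (star d)) as (K & k & _ & _ & Hk).
  exists K, (star k). apply (kernel_of_pointwise (r := r1)); [intro X | exact E1].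
  apply kernel_star_of_normal_mono; [| exact (Hk X)].
  exact (D_diagonals_normal (orthonormal_biproduct_pointwise Hb X)
           (component_eq X E1) (component_eq X E2)).
Qed.

End FunctorCategory.

Theorem proposition2p5 (C D : StarCat) :
  is_pre_hilbert D -> is_pre_hilbert (FunStarCat C D).
Proof.
  intros [[z Hz] [HD2 [HD3 HD4]]].
  split; [|split; [|split]].
  - exists (const_sfun C z). exact (const_zero_object C Hz).
  - intros F1 F2.
    destruct (has_orthonormal_biproducts Hz HD2 F1 F2) as (P & p1 & p2 & Hb & _).
    exists P, (star p1), p1, (star p2), p2. exact Hb.
  - intros F G th. destruct (has_isometric_kernels Hz HD3 th) as (K & k & Hk & Ik & _).
    exists K, k. split; assumption.
  - intros F P s1 r1 s2 r2 Hb d. exact (diagonal_normal_mono Hz HD2 HD3 HD4 Hb).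
Qed.
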